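(* Let $Q=(q_n)_{n\ge1}$ be a basic sequence that is infinite in limit, and let $F$ be a $Q$-special sequence. Then $x_F$ is not simply $Q$-normal.
   Context: A basic sequence is a sequence $Q=(q_n)_{n\ge1}$ of integers with $q_n\ge 2$; it is infinite in limit if $q_n\to\infty$. $\mathbb{N}$ denotes the positive integers. For each positive integer $j$ let $\nu_j=\min\{N : q_m\ge 2j^2 \text{ for all } m\ge N\}$. Define $l_1=\max(\nu_2-1,1)$ and, recursively for $i\ge 2$, $l_i=\max\big(\min\{k\in\mathbb{N} : l_1+2l_2+\cdots+(i-1)l_{i-1}+ik\ge \nu_{i+1}-1\},1\big)$. Put $L_i=\sum_{j=1}^i jl_j$ (with $L_0=0$). Let $S_Q=\{(a,b,c)\in\mathbb{N}^3 : b\le l_a,\ c\le a\}$ and $\phi_Q(a,b,c)=L_{a-1}+(b-1)a+c$; $\phi_Q$ is a bijection $S_Q\to\mathbb{N}$. A $Q$-special sequence is a family of integers $F=(F_{(a,b,c)})_{(a,b,c)\in S_Q}$ with $F_{(a,b,1)}=0$ for all $(a,b,1)\in S_Q$ and $\frac{F_{(a,b,c)}}{q_{\phi_Q(a,b,c)}}\in\left[\frac{c-1}{a}-\frac{1}{2a^2},\frac{c-1}{a}+\frac{1}{2a^2}\right]$ for $(a,b,c)\in S_Q$ with $c>1$. For such $F$ put $E_{F,n}=F_{\phi_Q^{-1}(n)}$ and $x_F=\sum_{n=1}^\infty \frac{E_{F,n}}{q_1q_2\cdots q_n}$; this is the $Q$-Cantor series expansion of $x_F$, with digits $E_{F,n}$.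 For a real $x\in[0,1)$ with $Q$-Cantor series expansion $x=\sum_n \frac{E_n}{q_1\cdots q_n}$ ($E_n\in\{0,\dots,q_n-1\}$, $E_n\ne q_n-1$ infinitely often) and a nonnegative integer $d$, let $N_n^Q(d,x)=\#\{1\le j\le n : E_j=d\}$ and $Q_n^{(1)}=\sum_{j=1}^n\frac1{q_j}$. The number $x$ is simply $Q$-normal if $\lim_{n\to\infty} N_n^Q(d,x)/Q_n^{(1)}=1$ for every nonnegative integer $d$ (blocks of length $1$). *)

From HB Require Import structures.
From mathcomp Require Import all_boot all_order all_algebra zify.
From mathcomp Require Import boolp classical_sets reals topology normedtype sequences.
Set Implicit Arguments. Unset Strict Implicit. Unset Printing Implicit Defensive.
Import Order.TTheory GRing.Theory Num.Theory.
Import numFieldNormedType.Exports.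

(* A basic sequence q = (q_n)_{n>=1} is a function nat -> nat; the value q 0
   is irrelevant (junk) and never used. *)

Definition basic_seq (q : nat -> nat) : Prop := forall n, (1 <= n)%N -> (2 <= q n)%N.
Definition infinite_in_limit (q : nat -> nat) : Prop :=
  forall M, exists N, forall n, (N <= n)%N -> (M <= q n)%N.

Definition nu_pred (q : nat -> nat) (j N : nat) : bool :=
  `[< (0 < N)%N /\ forall m, (N <= m)%N -> (2 * j ^ 2 <= q m)%N >].

Definition nu (q : nat -> nat) (j : nat) : nat :=
  match pselect (exists N, nu_pred q j N) with
  | left h => ex_minn h
  | right _ => 0%N
  end.

Lemma minK_ex (m L v : nat) :
  exists k, (0 < k)%N && (v - 1 <= L + m.+1 * k)%N.
Proof. exists v.+1; apply/andP; split=> //; nia. Qed.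

Definition minK (m L v : nat) : nat := ex_minn (minK_ex m L v).

(* lL q i = (l_{i+1}, L_{i+1}) *)
Fixpoint lL (q : nat -> nat) (i : nat) : nat * nat :=
  match i with
  | 0 => let l := maxn (nu q 2 - 1) 1 in (l, l)
  | i'.+1 =>
      let Lprev := (lL q i').2 in
      let l := maxn (minK i'.+1 Lprev (nu q i'.+3)) 1 in
      (l, (Lprev + i'.+2 * l)%N)
  end.

(* l_i (i >= 1) and L_i = sum_{j=1}^i j l_j, with L_0 = 0 *)
Definition l_ (q : nat -> nat) (i : nat) : nat :=
  if i is i'.+1 then (lL q i').1 else 0%N.
Definition L_ (q : nat -> nat) (i : nat) : nat :=
  if i is i'.+1 then (lL q i').2 else 0%N.

Definition inS (q : nat -> nat) (a b c : nat) : bool :=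
  [&& (0 < a)%N, (0 < b)%N, (0 < c)%N, (b <= l_ q a)%N & (c <= a)%N].

Definition phi (q : nat -> nat) (a b c : nat) : nat :=
  (L_ q a.-1 + b.-1 * a + c)%N.

(* the inverse of phi_Q (for n >= 1): a is the least a with n <= L_a,
   then n = L_{a-1} + (b-1) a + c with 1 <= c <= a. *)
Definition phi_inv_a (q : nat -> nat) (n : nat) : nat :=
  find (fun a => (n <= L_ q a)%N) (iota 0 n.+1).
Definition phi_inv (q : nat -> nat) (n : nat) : nat * nat * nat :=
  let a := phi_inv_a q n in
  let r := (n - L_ q a.-1 - 1)%N in
  (a, (r %/ a).+1, (r %% a).+1).

Local Open Scope classical_set_scope.
Local Open Scope ring_scope.

Definition special (R : realType) (q : nat -> nat) (F : nat -> nat -> nat -> int)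
  : Prop :=
  forall a b c, inS q a b c ->
    (c = 1%N -> F a b c = 0) /\
    ((1 < c)%N ->
       (c.-1%:R / a%:R - 1 / (2 * a%:R ^+ 2) <= (F a b c)%:~R / (q (phi q a b c))%:R :> R)
       /\ ((F a b c)%:~R / (q (phi q a b c))%:R <= c.-1%:R / a%:R + 1 / (2 * a%:R ^+ 2) :> R)).

Definition E_F (q : nat -> nat) (F : nat -> nat -> nat -> int) (n : nat) : int :=
  let: (a, b, c) := phi_inv q n in F a b c.

Definition qprod (R : realType) (q : nat -> nat) (n : nat) : R :=
  \prod_(1 <= k < n.+1) (q k)%:R.

Definition x_F (R : realType) (q : nat -> nat) (F : nat -> nat -> nat -> int) : R :=
  limn (fun N : nat => \sum_(1 <= n < N) ((E_F q F n)%:~R / qprod R q n) : R).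

(* The n-th digit (n >= 1) of the Q-Cantor series expansion of x in [0,1)
   (the expansion with E_n <> q_n - 1 infinitely often):
   E_n = floor(q_1...q_n x) - q_n floor(q_1...q_{n-1} x). *)
Definition cantor_digit (R : realType) (q : nat -> nat) (x : R) (n : nat) : int :=
  Num.floor (qprod R q n * x) - (q n)%:Z * Num.floor (qprod R q n.-1 * x).

Definition Ncount (R : realType) (q : nat -> nat) (d : nat) (x : R) (n : nat) : nat :=
  #|[set j : 'I_n.+1 | (0 < j)%N && (cantor_digit q x j == d%:Z)]|.

Definition Q1 (R : realType) (q : nat -> nat) (n : nat) : R :=
  \sum_(1 <= j < n.+1) ((q j)%:R)^-1.

Definition simply_normal (R : realType) (q : nat -> nat) (x : R) : Prop :=
  forall d : nat, (fun n => (Ncount q d x n)%:R / Q1 R q n) @ \oo --> (1 : R).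

From HB Require Import structures.
From mathcomp Require Import all_boot all_order all_algebra zify ring lra.
From mathcomp Require Import boolp classical_sets reals topology normedtype sequences.
Set Implicit Arguments. Unset Strict Implicit. Unset Printing Implicit Defensive.
Import Order.TTheory GRing.Theory Num.Theory.
Import numFieldNormedType.Exports.

(* The digits of x_F are the E_(F,n), since they lie in [0, q_n) and vanish
   at the start of every row (a, b, .).  Row a of S_Q has a positions, at each
   of which q_n >= 2a, so it contributes one zero digit but at most 1/2 to
   Q^(1)_n.  Summing over the l_a rows of each block, at n = L_a the count of
   the digit 0 is at least 2 Q^(1)_n, so N_n(0, x_F) / Q^(1)_n cannot tend to 1. *)

Section Blocks.
Variable q : nat -> nat.

Lemma L_succ a : L_ q a.+1 = (L_ q a + a.+1 * l_ q a.+1)%N.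
Proof. by case: a => [|a] //=; rewrite /L_ /l_ /= add0n mul1n. Qed.

Lemma l_gt0 a : (0 < l_ q a.+1)%N.
Proof. by case: a => [|a]; rewrite /l_ /= leq_maxr. Qed.

Lemma leq_L_self a : (a <= L_ q a)%N.
Proof. by elim: a => [|a IH] //; rewrite L_succ; have := l_gt0 a; nia. Qed.

Lemma leq_L m n : (m <= n)%N -> (L_ q m <= L_ q n)%N.
Proof.
move=> /subnK <-; elim: (n - m)%N => [|d IH] //.
by rewrite addSn L_succ (leq_trans IH) ?leq_addr.
Qed.

Lemma nu_leq_L a : (nu q a.+2 - 1 <= L_ q a.+1)%N.
Proof.
case: a => [|a]; first by rewrite /L_ /= leq_maxl.
rewrite /L_ /= /minK; case: ex_minnP => k /andP [_ hk] _.
by apply: (leq_trans hk); rewrite leq_add2l leq_mul2l leq_maxl orbT.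
Qed.

Lemma nuP : infinite_in_limit q -> forall j m, (nu q j <= m)%N -> (2 * j ^ 2 <= q m)%N.
Proof.
move=> hinf j m; rewrite /nu; case: pselect => [h|hn].
  by case: ex_minnP => N /asboolP [_ H] _; apply: H.
exfalso; apply: hn; have [N0 HN] := hinf (2 * j ^ 2)%N.
by exists N0.+1; apply/asboolP; split => // m' hm; apply: HN; exact: ltnW.
Qed.

Lemma q_block_ge : basic_seq q -> infinite_in_limit q ->
  forall a j, (L_ q a < j)%N -> (2 * a.+1 <= q j)%N.
Proof.
move=> hQ hinf [|a] j hj; first by rewrite muln1; apply: hQ; case: j hj.
have hn : (nu q a.+2 <= j)%N by have := nu_leq_L a; lia.
by have := nuP hinf hn; nia.
Qed.

Lemma phi_inv_aE a n : (L_ q a < n <= L_ q a.+1)%N -> phi_inv_a q n = a.+1.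
Proof.
move=> /andP [h1 h2]; rewrite /phi_inv_a.
have hhas : has (fun a0 => (n <= L_ q a0)%N) (iota 0 n.+1).
  by apply/hasP; exists a.+1; rewrite ?mem_iota //=; have := leq_L_self a; lia.
set i := find _ _.
have hi : (i < n.+1)%N by rewrite -(size_iota 0 n.+1) -has_find.
have := nth_find 0 hhas; rewrite -/i nth_iota // add0n => hLi.
have [hlt|hgt|//] := ltngtP i a.+1; first by have := @leq_L i a; lia.
by have := before_find 0 hgt; rewrite nth_iota ?add0n ?h2 //; have := leq_L_self a; lia.
Qed.

Lemma phi_inv_blockE a r : (r < a.+1 * l_ q a.+1)%N ->
  phi_inv q (L_ q a + r + 1) = (a.+1, (r %/ a.+1).+1, (r %% a.+1).+1)
  /\ inS q a.+1 (r %/ a.+1).+1 (r %% a.+1).+1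
  /\ phi q a.+1 (r %/ a.+1).+1 (r %% a.+1).+1 = (L_ q a + r + 1)%N.
Proof.
move=> hr.
have ha : phi_inv_a q (L_ q a + r + 1) = a.+1 by apply: phi_inv_aE; rewrite L_succ; lia.
have hr' : (L_ q a + r + 1 - L_ q a.+1.-1 - 1 = r)%N by rewrite /=; lia.
split; first by rewrite /phi_inv ha hr'.
split; first by rewrite /inS /= ltn_pmod //= andbT ltn_divLR // mulnC.
by rewrite /phi /= addnS -addnA -divn_eq; lia.
Qed.

Lemma block_exists n : (0 < n)%N -> exists a r,
  n = (L_ q a + r + 1)%N /\ (r < a.+1 * l_ q a.+1)%N.
Proof.
move=> n0.
have ex : exists k, (n <= L_ q k)%N by exists n; exact: leq_L_self.
case: (ex_minnP ex) => -[|a] hk hmin; first by move: hk; rewrite /L_; lia.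
have ha : (L_ q a < n)%N by rewrite ltnNge; apply/negP => /hmin; lia.
by exists a, (n - L_ q a - 1)%N; move: hk; rewrite L_succ; lia.
Qed.

End Blocks.

Local Open Scope ring_scope.

Section CantorSeries.
Variables (R : realType) (q : nat -> nat) (e : nat -> int).
Hypothesis hQ : basic_seq q.
Hypothesis e_ge0 : forall n, 0 <= e n.+1.
Hypothesis e_lt : forall n, e n.+1 < (q n.+1)%:Z.
Hypothesis e_nonmax : forall n, exists2 m, (n <= m)%N & e m.+1 < (q m.+1)%:Z - 1.

Let P := qprod R q.

Definition cantor_partial (N : nat) : R := \sum_(1 <= n < N) (e n)%:~R / P n.
Let S := cantor_partial.

Lemma qprod0 : P 0 = 1. Proof. by rewrite /P /qprod big_geq. Qed.

Lemma qprodS n : P n.+1 = P n * (q n.+1)%:R.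
Proof. by rewrite /P /qprod big_nat_recr. Qed.

Lemma q_ge2 n : 2 <= (q n.+1)%:R :> R.
Proof. by rewrite ler_nat; apply: hQ. Qed.

Lemma qprod_gt0 n : 0 < P n.
Proof.
elim: n => [|n IH]; first by rewrite qprod0.
by rewrite qprodS mulr_gt0 // (lt_le_trans _ (q_ge2 n)).
Qed.

Lemma cantor_partial1 : S 1 = 0. Proof. by rewrite /S /cantor_partial big_geq. Qed.

Lemma cantor_partialS n : S n.+2 = S n.+1 + (e n.+1)%:~R / P n.+1.
Proof. by rewrite /S /cantor_partial big_nat_recr. Qed.

Lemma cantor_term_le n (c : R) : (e n.+1)%:~R <= (q n.+1)%:R - c ->
  (e n.+1)%:~R / P n.+1 <= (P n)^-1 - c / P n.+1.
Proof.
move=> he; have hP := qprod_gt0 n; have hq := q_ge2 n.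
have hq0 : (q n.+1)%:R != 0 :> R by rewrite gt_eqF // (lt_le_trans _ hq).
rewrite qprodS; have -> : (P n)^-1 - c / (P n * (q n.+1)%:R) =
    ((q n.+1)%:R - c) / (P n * (q n.+1)%:R) by field; rewrite hq0 gt_eqF.
by rewrite ler_pM2r // invr_gt0 mulr_gt0 // (lt_le_trans _ hq).
Qed.

Lemma digit_le n : (e n.+1)%:~R <= (q n.+1)%:R - 1 :> R.
Proof.
have h : e n.+1 <= (q n.+1)%:Z - 1 by have := e_lt n; lia.
by move: h; rewrite -(ler_int R) intrB pmulrn.
Qed.

Lemma cantor_partial_tail n d : S (n + d).+1 - S n.+1 <= (P n)^-1 - (P (n + d))^-1.
Proof.
elim: d => [|d IH]; first by rewrite addn0 !subrr.
rewrite addnS cantor_partialS.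
have := cantor_term_le (digit_le (n + d)); rewrite mul1r; lra.
Qed.

Lemma cantor_partial_nondecr : nondecreasing_seq S.
Proof.
apply/nondecreasing_seqP => -[|n]; first by rewrite cantor_partial1 /S /cantor_partial big_geq.
by rewrite cantor_partialS lerDl divr_ge0 ?ler0z ?e_ge0 // ltW // qprod_gt0.
Qed.

Lemma cantor_partial_cvg : cvgn S.
Proof.
apply: nondecreasing_is_cvgn; first exact: cantor_partial_nondecr.
exists 1 => _ [[|k] _ <-]; first by rewrite /S /cantor_partial big_geq.
have := cantor_partial_tail 0 k; rewrite cantor_partial1 qprod0 invr1 add0n.
have : 0 < (P k)^-1 by rewrite invr_gt0 qprod_gt0.
lra.
Qed.

Lemma cantor_partial_le_lim n : S n.+1 <= limn S.
Proof. exact: (nondecreasing_cvgn_le cantor_partial_nondecr cantor_partial_cvg). Qed.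

(* Strictness needs a later digit below q - 1: it costs at least 1 / P m.+1. *)
Lemma lim_lt_cantor_partial n : limn S < S n.+1 + (P n)^-1.
Proof.
have [m hnm hm] := e_nonmax n.
have hPm : 0 < (P m.+1)^-1 by rewrite invr_gt0 qprod_gt0.
suff : limn S <= S n.+1 + (P n)^-1 - (P m.+1)^-1 by lra.
apply: limr_le; first exact: cantor_partial_cvg.
exists m.+2 => // -[|k] //= hk.
have t1 := cantor_partial_tail n (m - n); rewrite subnKC // in t1.
have t2 := cantor_partial_tail m.+1 (k - m.+1); rewrite subnKC // in t2.
have hlt : (e m.+1)%:~R <= (q m.+1)%:R - 2 :> R.
  have h : e m.+1 <= (q m.+1)%:Z - 2 by lia.
  by move: h; rewrite -(ler_int R) intrB pmulrn.
have t3 := cantor_term_le hlt; rewrite cantor_partialS in t2.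
have : 0 < (P k)^-1 by rewrite invr_gt0 qprod_gt0.
lra.
Qed.

(* Integer part of P n * limn S, which equals P n * S n.+1. *)
Fixpoint cantor_head (n : nat) : int :=
  if n is k.+1 then (q k.+1)%:Z * cantor_head k + e k.+1 else 0.

Lemma cantor_headE n : (cantor_head n)%:~R = P n * S n.+1.
Proof.
elim: n => [|n IH]; first by rewrite /= cantor_partial1 mulr0.
rewrite /= intrD intrM IH cantor_partialS qprodS pmulrn.
have hP := qprod_gt0 n; have hq := q_ge2 n.
have hq0 : (q n.+1)%:R != 0 :> R by rewrite gt_eqF // (lt_le_trans _ hq).
by field; rewrite hq0 gt_eqF.
Qed.

Lemma floor_qprod_lim n : Num.floor (P n * limn S) = cantor_head n.
Proof.
apply: floor_def; rewrite intrD cantor_headE; have hP := qprod_gt0 n.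
rewrite ler_pM2l ?cantor_partial_le_lim //=.
by rewrite -[X in _ + X](divff (lt0r_neq0 hP)) -mulrDr ltr_pM2l ?lim_lt_cantor_partial.
Qed.

Lemma cantor_digit_lim n : cantor_digit q (limn S) n.+1 = e n.+1.
Proof. by rewrite /cantor_digit /= !floor_qprod_lim /=; lia. Qed.

End CantorSeries.

Lemma special_window_lt1 (R : realType) (a c : nat) : (c < a)%N ->
  c%:R / a%:R + 1 / (2 * a%:R ^+ 2) < 1 :> R.
Proof.
move=> hca; have hA : 1 <= a%:R :> R by rewrite ler1n; lia.
have hc : c%:R + 1 <= a%:R :> R by rewrite natr1 ler_nat.
have hX : a%:R * (a%:R)^-1 = 1 :> R by rewrite divff // gt_eqF // (lt_le_trans ltr01).
have -> : 1 / (2 * a%:R ^+ 2) = (a%:R)^-1 * (a%:R)^-1 / 2 :> R.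
  by field; rewrite gt_eqF // (lt_le_trans ltr01).
have hX0 : 0 < (a%:R)^-1 :> R by rewrite invr_gt0 (lt_le_trans ltr01).
have hX1 : (a%:R)^-1 <= 1 :> R by rewrite invf_le1 // (lt_le_trans ltr01).
nra.
Qed.

Lemma special_window_gt0 (R : realType) (a c : nat) : (0 < c)%N -> (0 < a)%N ->
  0 < c%:R / a%:R - 1 / (2 * a%:R ^+ 2) :> R.
Proof.
move=> hc ha; have hA : 1 <= a%:R :> R by rewrite ler1n.
have hC : 1 <= c%:R :> R by rewrite ler1n.
have hX : a%:R * (a%:R)^-1 = 1 :> R by rewrite divff // gt_eqF // (lt_le_trans ltr01).
have -> : 1 / (2 * a%:R ^+ 2) = (a%:R)^-1 * (a%:R)^-1 / 2 :> R.
  by field; rewrite gt_eqF // (lt_le_trans ltr01).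
have hX0 : 0 < (a%:R)^-1 :> R by rewrite invr_gt0 (lt_le_trans ltr01).
have hX1 : (a%:R)^-1 <= 1 :> R by rewrite invf_le1 // (lt_le_trans ltr01).
nra.
Qed.

Section SpecialDigits.
Variables (R : realType) (q : nat -> nat) (F : nat -> nat -> nat -> int).
Hypothesis hQ : basic_seq q.
Hypothesis hF : special R q F.

Lemma E_F_block a r : (r < a.+1 * l_ q a.+1)%N ->
  E_F q F (L_ q a + r + 1) = F a.+1 (r %/ a.+1).+1 (r %% a.+1).+1.
Proof. by move=> /phi_inv_blockE [h _]; rewrite /E_F h. Qed.

Lemma E_F_block_col1 a r : (r < a.+1 * l_ q a.+1)%N -> (r %% a.+1 = 0)%N ->
  E_F q F (L_ q a + r + 1) = 0.
Proof.
move=> hr hm; rewrite E_F_block //; have [_ [hin _]] := phi_inv_blockE hr.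
by have [+ _] := hF hin; apply; rewrite hm.
Qed.

Lemma E_F_range n : (0 < n)%N -> 0 <= E_F q F n < (q n)%:Z.
Proof.
move=> /(block_exists q) [a [r [-> hr]]].
have [_ [hin hphi]] := phi_inv_blockE hr.
rewrite E_F_block //; have [hF1 hF2] := hF hin.
have hq : (2 <= q (L_ q a + r + 1))%N by apply: hQ; lia.
have [hm|hm] := posnP (r %% a.+1).
  by rewrite (hF1 _) ?hm //= ltz_nat; lia.
have [hlo hhi] := hF2 (hm : (1 < (r %% a.+1).+1)%N); rewrite hphi /= in hlo hhi.
have hc : (r %% a.+1 < a.+1)%N by rewrite ltn_pmod.
have hQ0 : 0 < (q (L_ q a + r + 1))%:R :> R by rewrite ltr0n; lia.
apply/andP; split.
  have := lt_le_trans (special_window_gt0 R hm (ltn0Sn a)) hlo.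
  by rewrite pmulr_lgt0 ?invr_gt0 // ltr0z => /ltW.
have := le_lt_trans hhi (special_window_lt1 R hc).
by rewrite ltr_pdivrMr // mul1r -[X in _ < X]/((q _)%:Z%:~R) ltr_int.
Qed.

Lemma E_F_zero_after n : exists2 m, (n <= m)%N & E_F q F m.+1 = 0.
Proof.
exists (L_ q n); first exact: leq_L_self.
by rewrite -[(L_ q n).+1]addn1 -[L_ q n]addn0 E_F_block_col1 // muln_gt0 l_gt0.
Qed.

Lemma cantor_digit_x_F n : cantor_digit q (x_F R q F) n.+1 = E_F q F n.+1.
Proof.
apply: cantor_digit_lim => // m.
- by have /andP [] := E_F_range (ltn0Sn m).
- by have /andP [] := E_F_range (ltn0Sn m).
- have [k hk hE] := E_F_zero_after m; exists k => //.
  by rewrite hE subr_gt0 ltz_nat; apply: hQ.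
Qed.

End SpecialDigits.

Section ZeroDigits.
Variables (R : realType) (q : nat -> nat) (F : nat -> nat -> nat -> int).
Hypothesis hQ : basic_seq q.
Hypothesis hinf : infinite_in_limit q.
Hypothesis hF : special R q F.

Definition zero_count (n : nat) : nat := \sum_(1 <= j < n.+1) (E_F q F j == 0 : nat).

Lemma Ncount0_x_F n : Ncount q 0 (x_F R q F) n = zero_count n.
Proof.
rewrite /Ncount -sum1_card big_mkcond /=.
under eq_bigr => i _ do rewrite /in_mem /= /in_set asboolb.
rewrite -(big_mkord xpredT (fun j => if (0 < j)%N && (cantor_digit q (x_F R q F) j == 0%:Z)
  then 1%N else 0%N)) big_ltn // /= add0n.
apply: eq_big_nat => -[|j] //= _.
by rewrite (cantor_digit_x_F hQ hF); case: eqP.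
Qed.

Lemma sum_block (V : nmodType) (f : nat -> V) a :
  \sum_(1 <= j < (L_ q a.+1).+1) f j =
  \sum_(1 <= j < (L_ q a).+1) f j + \sum_(0 <= r < a.+1 * l_ q a.+1) f (L_ q a + r + 1)%N.
Proof.
rewrite (big_cat_nat _ (n := (L_ q a).+1)) ?ltnS ?leq_L //; congr (_ + _).
rewrite -{1}(add0n (L_ q a).+1) big_addn L_succ.
by rewrite (_ : (_ - _ = a.+1 * l_ q a.+1)%N); [apply: eq_bigr => r _; congr f | ]; lia.
Qed.

(* Each row (b) of block a.+1 has a zero digit in column c = 1. *)
Lemma zero_count_rows a k : (k <= l_ q a.+1)%N ->
  (k <= \sum_(0 <= r < a.+1 * k) (E_F q F (L_ q a + r + 1) == 0 : nat))%N.
Proof.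
elim: k => [|k IH] hk //.
rewrite (big_cat_nat _ (n := a.+1 * k)) ?leq_mul2l ?leqnSn ?orbT //=.
rewrite (big_ltn (m := a.+1 * k)) ?ltn_mul2l ?ltnSn //.
rewrite (E_F_block_col1 hF) ?modnMr ?ltn_mul2l ?ltnSn // eqxx.
by have := IH (ltnW hk); lia.
Qed.

Lemma Q1_block a :
  2 * \sum_(0 <= r < a.+1 * l_ q a.+1) ((q (L_ q a + r + 1))%:R)^-1 <= (l_ q a.+1)%:R :> R.
Proof.
set l := l_ q a.+1.
have h : \sum_(0 <= r < a.+1 * l) ((q (L_ q a + r + 1))%:R)^-1
    <= \sum_(0 <= r < a.+1 * l) ((2 * a.+1)%:R)^-1 :> R.
  apply: ler_sum => r _.
  have hb := q_block_ge hQ hinf (j := (L_ q a + r + 1)%N) (a := a) ltac:(lia).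
  by rewrite lef_pV2 ?posrE ?ltr0n ?ler_nat //; lia.
rewrite sumr_const_nat subn0 in h.
have <- : 2 * ((2 * a.+1)%:R^-1 *+ (a.+1 * l)) = l%:R :> R.
  by rewrite -mulr_natr !natrM; field; rewrite nat1r pnatr_eq0.
exact: ler_wpM2l.
Qed.

Lemma zero_count_ge_Q1 a : 2 * Q1 R q (L_ q a) <= (zero_count (L_ q a))%:R.
Proof.
elim: a => [|a IH]; first by rewrite /Q1 /zero_count /L_ !big_geq // mulr0.
rewrite /Q1 /zero_count !sum_block natrD mulrDr lerD //.
by apply: le_trans (Q1_block a) _; rewrite ler_nat zero_count_rows.
Qed.

Lemma Q1_gt0 n : (0 < n)%N -> 0 < Q1 R q n.
Proof.
case: n => // n _; rewrite /Q1 big_ltn // ltr_pwDl ?invr_gt0 ?ltr0n //.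
- by have := hQ (ltn0Sn 0); lia.
- by apply: sumr_ge0 => i _; rewrite invr_ge0.
Qed.

End ZeroDigits.

Theorem mainTheorem2 (R : realType) (q : nat -> nat)
  (hQ : basic_seq q) (hinf : infinite_in_limit q)
  (F : nat -> nat -> nat -> int) (hF : special R q F) :
  ~ simply_normal q (x_F R q F).
Proof.
move=> /(_ 0%N) hcvg.
have H32 : (1 : R) < 3 / 2 by lra.
have [M _ HM] := cvgr_lt _ hcvg _ H32.
have hQ1 : 0 < Q1 R q (L_ q M.+1) by apply: (Q1_gt0 R hQ); have := leq_L_self q M.+1; lia.
have := HM _ (leq_trans (leq_L_self q M) (leq_L q (leqnSn M))).
rewrite /= (Ncount0_x_F hQ hF) ltr_pdivrMr //.
have := zero_count_ge_Q1 hQ hinf hF M.+1.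
lra.
Qed.
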